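(* Let $\mathcal{A}$ be finite, $p\in\Delta_{\mathcal{A}}$ of full support, $\mathcal{E}$ an exponential family, and $q(T|A)\in C(\mathcal{A},\mathcal{T})$. Then $D(q(T)\|\tilde q(T))\le\Lambda:=D(p\|\tilde p)$, and the following are equivalent: (i) $D(q(T)\|\tilde q(T))=\Lambda$; (ii) for every $t\in\mathrm{supp}(q(T))$ there exists $\mathcal{A}_j\in\bar{\mathcal{A}}$ with $\mathcal{A}^q_t\subseteq\mathcal{A}_j$; (iii) the channel $\bar q\in C(\bar{\mathcal{A}},\mathcal{T})$ is congruent.
   Context: $\mathcal{T}=\mathbb{N}$. $\tilde p$ is the unique minimiser of $D(p\|r)$ over the closure of $\mathcal{E}$ (here of full support). $\bar{\mathcal{A}}=\{\mathcal{A}_j\}_j$ is the partition for $a\sim a'\iff p(a)\tilde p(a')=p(a')\tilde p(a)$. $q(t)=\sum_ap(a)q(t|a)$, $\tilde q(t)=\sum_a\tilde p(a)q(t|a)$, $\mathcal{A}^q_t:=\{a:q(t|a)>0\}$, $\bar q(t|\mathcal{A}_j):=\frac{\sum_{a\in\mathcal{A}_j}q(t|a)p(a)}{p(\mathcal{A}_j)}$. A channel $\gamma\in C(\mathcal{B},\mathcal{T})$ is congruent if there is a function $f:\mathcal{T}\to\mathcal{B}$ with $f\circ\gamma=e_{\mathcal{B}}$. *)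

From mathcomp Require Import all_boot all_order all_algebra.
From mathcomp Require Import boolp classical_sets filter reals ereal topology
  normedtype sequences exp.
Set Implicit Arguments. Unset Strict Implicit. Unset Printing Implicit Defensive.
Import Order.TTheory GRing.Theory Num.Theory numFieldNormedType.Exports.
Local Open Scope ring_scope.

Section Defs.
Variable R : realType.

Definition klterm (x y : R) : \bar R :=
  if x == 0 then 0%E else if y == 0 then +oo%E else (x * ln (x / y))%:E.

Definition KL (A : finType) (P Q : A -> R) : \bar R :=
  (\sum_(a : A) klterm (P a) (Q a))%E.

Definition KLnat (P Q : nat -> R) : \bar R :=
  (\sum_(0 <= t <oo) klterm (P t) (Q t))%E.

Definition is_dist (A : finType) (P : A -> R) :=
  (forall a, 0 <= P a) /\ \sum_(a : A) P a = 1.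

Definition sums_to (u : nat -> R) (l : R) :=
  ((fun n => \sum_(0 <= t < n) u t) @ \oo --> l)%classic.

Definition is_channel (A : finType) (q : A -> nat -> R) :=
  forall a, (forall t, 0 <= q a t) /\ sums_to (q a) 1.

Definition expfam_member (A : finType) (d : nat) (nu : A -> R)
    (phi : 'I_d -> A -> R) (theta : 'I_d -> R) : A -> R :=
  fun a => nu a * expR (\sum_(i < d) theta i * phi i a) /
           \sum_(b : A) nu b * expR (\sum_(i < d) theta i * phi i b).

Definition in_expfam (A : finType) (d : nat) (nu : A -> R)
    (phi : 'I_d -> A -> R) (r : A -> R) :=
  exists theta : 'I_d -> R, r = expfam_member nu phi theta.

Definition in_closure (A : finType) (E : (A -> R) -> Prop) (r : A -> R) :=
  forall eps : R, 0 < eps -> exists r', E r' /\ forall a, `|r a - r' a| < eps.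

Definition simr (A : finType) (p pt : A -> R) (a a' : A) : bool :=
  p a * pt a' == p a' * pt a.

Definition blocks (A : finType) (p pt : A -> R) : {set {set A}} :=
  [set [set a' | simr p pt a a'] | a : A].

Definition outdist (A : finType) (P : A -> R) (q : A -> nat -> R) (t : nat) : R :=
  \sum_(a : A) P a * q a t.

Definition supp_at (A : finType) (q : A -> nat -> R) (t : nat) : {set A} :=
  [set a | 0 < q a t].

Definition qbar (A : finType) (p : A -> R) (q : A -> nat -> R)
    (B : {set A}) (t : nat) : R :=
  (\sum_(a in B) q a t * p a) / (\sum_(a in B) p a).

(* a channel g in C(Bs, nat) (inputs: the elements of the finite set Bs) is
   congruent if some f : nat -> Bs satisfies f o g = identity channel on Bs,
   i.e. sum_{t : f t = B'} g(t|B) = [B = B'] *)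
Definition congruent_on (X : finType) (Bs : {set X}) (g : X -> nat -> R) :=
  exists f : nat -> X, (forall t, f t \in Bs) /\
    forall B B', B \in Bs -> B' \in Bs ->
      sums_to (fun t => if f t == B' then g B t else 0) (B == B')%:R.

End Defs.

From mathcomp Require Import all_boot all_order all_algebra.
From mathcomp Require Import boolp classical_sets filter reals ereal topology
  normedtype sequences exp.
From mathcomp Require Import ring lra.
Import Order.TTheory GRing.Theory Num.Theory numFieldNormedType.Exports.
Set Implicit Arguments. Unset Strict Implicit.
Local Open Scope ring_scope.

(* Write c(a) = p(a)/pt(a), P = sum_a p(a) q(.|a) and Q = sum_a pt(a) q(.|a).
   As every row q(.|a) sums to 1, D(p||pt) = sum_a p(a) ln c(a) is the sum over t
   of sum_a p(a) q(t|a) ln c(a), and its difference with the t-th term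
   P(t) ln (P(t)/Q(t)) of D(P||Q) is the log-sum gap
     sum_a p(a) q(t|a) g(P(t) / (Q(t) c(a))),   g(y) = y - 1 - ln y >= 0.
   So D(P||Q) <= D(p||pt), with equality iff every gap vanishes, i.e. iff c is
   constant on each A^q_t; since the classes of ~ are the level sets of c, this
   is (ii).  Under (ii), sending t to the class containing A^q_t makes qbar
   congruent; conversely, the row qbar(.|A_j) of a congruent channel vanishes
   off f^-1(A_j), which forces A^q_t into f(t). *)

Lemma psumr_gt0P (R : numDomainType) (I : finType) (P : pred I) (F : I -> R) :
  (forall i, P i -> 0 <= F i) ->
  0 < \sum_(i | P i) F i <-> exists2 i, P i & 0 < F i.
Proof.
move=> F_ge0; rewrite lt0r sumr_ge0 // andbT psumr_neq0 //.
split=> [/hasP [i _ /andP [Pi Fi]]|[i Pi Fi]]; first by exists i.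
by apply/hasP; exists i; rewrite ?mem_index_enum ?Pi.
Qed.

Section ln_gap.
Variable R : realType.
Implicit Types x y : R.

Definition ln_gap y := y - 1 - ln y.

Lemma ln_le_subr1 y : 0 < y -> ln y <= y - 1.
Proof.
by move=> y0; have := @le_ln1Dx R (y - 1); rewrite [1 + _]addrC subrK; apply; lra.
Qed.

Lemma ln_lt_subr1 y : 0 < y -> y != 1 -> ln y < y - 1.
Proof.
move=> y0 y1; rewrite -[X in _ < X]expRK ltr_ln ?posrE ?expR_gt0 //.
by have := @expR_gt1Dx R (y - 1); rewrite [1 + _]addrC subrK; apply; rewrite subr_eq0.
Qed.

Lemma ln_gap_ge0 y : 0 < y -> 0 <= ln_gap y.
Proof. by move=> /ln_le_subr1; rewrite /ln_gap subr_ge0. Qed.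

Lemma ln_gap_eq0 y : 0 < y -> ln_gap y = 0 -> y = 1.
Proof.
move=> y0 /eqP; rewrite /ln_gap subr_eq0 => /eqP gap0.
by apply/eqP; apply: contraT => /(ln_lt_subr1 y0); rewrite gap0 ltxx.
Qed.

Lemma subr_le_mul_ln_div x y : 0 < x -> 0 < y -> x - y <= x * ln (x / y).
Proof.
move=> x0 y0; have := ln_le_subr1 (divr_gt0 y0 x0).
rewrite -[x / y]invf_div lnV ?posrE ?divr_gt0 // => ln_le.
have -> : x - y = x * (1 - y / x) by field; rewrite gt_eqF.
by rewrite ler_pM2l //; lra.
Qed.

End ln_gap.

Section nonneg_series.
Variable R : realType.
Implicit Types u w : nat -> R.

Local Notation psum u := (fun n => \sum_(0 <= t < n) u t).

Lemma psum_nondecreasing u : (forall t, 0 <= u t) ->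
  {homo psum u : n m / (n <= m)%N >-> n <= m}.
Proof.
move=> u_ge0 n m nm; rewrite (big_cat_nat (leq0n n) nm) /= lerDl.
exact: sumr_ge0.
Qed.

Lemma sums_to_term_le u l : (forall t, 0 <= u t) -> sums_to u l ->
  forall t, u t <= l.
Proof.
move=> u_ge0 ul t.
have := nondecreasing_cvgn_le (psum_nondecreasing u_ge0) (cvgP _ ul) t.+1.
rewrite (cvg_lim _ ul) // big_nat_recr //=; apply: le_trans.
by rewrite lerDr; apply: sumr_ge0.
Qed.

Lemma sums_to_eq0P u l : (forall t, 0 <= u t) -> sums_to u l ->
  l = 0 <-> forall t, u t = 0.
Proof.
move=> u_ge0 ul; split=> [l0 t|u0].
  by apply/eqP; rewrite eq_le u_ge0 andbT -l0 (sums_to_term_le u_ge0 ul).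
have psum0 : psum u = fun=> 0 by apply/funext => n; apply: big1.
rewrite -(cvg_lim _ ul) // psum0; exact: lim_cst.
Qed.

Lemma dominated_psum_cvg u w : (forall t, 0 <= u t) -> (forall t, u t <= w t) ->
  cvgn (psum w) -> cvgn (psum u).
Proof.
move=> u_ge0 uw /cvg_has_ub [M wM].
apply: nondecreasing_is_cvgn; first exact: psum_nondecreasing.
exists M => _ [n _ <-].
apply: le_trans (_ : \sum_(0 <= t < n) w t <= M); first exact: ler_sum.
by apply: le_trans (ler_norm _) _; apply: wM; exists n.
Qed.

End nonneg_series.

Section channel.
Variables (R : realType) (A : finType) (q : A -> nat -> R).
Hypothesis q_ge0 : forall a t, 0 <= q a t.

Lemma outdist_ge0 w t : (forall a, 0 <= w a) -> 0 <= outdist w q t.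
Proof. by move=> w_ge0; apply: sumr_ge0 => a _; rewrite mulr_ge0. Qed.

Lemma outdist_gt0P w t : (forall a, 0 < w a) ->
  0 < outdist w q t <-> exists a, 0 < q a t.
Proof.
move=> w_gt0; rewrite /outdist psumr_gt0P => [|a _]; last by rewrite mulr_ge0 // ltW.
split=> [[a _]|[a qa]]; last by exists a; rewrite ?mulr_gt0.
by rewrite pmulr_rgt0 // => qa; exists a.
Qed.

Lemma qbar_gt0P (p : A -> R) (B : {set A}) t : (forall a, 0 < p a) ->
  0 < qbar p q B t <-> exists2 a, a \in B & 0 < q a t.
Proof.
move=> p_gt0; have qp_ge0 a : a \in B -> 0 <= q a t * p a.
  by rewrite mulr_ge0 // ltW.
split=> [|[a aB qa]].
  rewrite /qbar => /lt0r_neq0; rewrite mulf_eq0 negb_or => /andP [/eqP + _].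
  by move=> /(psumr_neq0P qp_ge0) [a /andP [aB]]; rewrite pmulr_lgt0 //; exists a.
have p_ge0 b : b \in B -> 0 <= p b by move=> _; exact: ltW.
rewrite /qbar divr_gt0 //; [apply/(psumr_gt0P qp_ge0)|apply/(psumr_gt0P p_ge0)];
  by exists a; rewrite ?mulr_gt0.
Qed.

Lemma qbar_ge0 (p : A -> R) (B : {set A}) t : (forall a, 0 <= p a) ->
  0 <= qbar p q B t.
Proof.
by move=> p_ge0; rewrite divr_ge0 ?sumr_ge0 // => a _; rewrite mulr_ge0.
Qed.

Hypothesis q_sums1 : forall a, sums_to (q a) 1.

Lemma sums_to_mix (k : A -> R) :
  sums_to (fun t => \sum_(a : A) k a * q a t) (\sum_(a : A) k a).
Proof.
rewrite /sums_to.
have -> : (fun n => \sum_(0 <= t < n) \sum_(a : A) k a * q a t) =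
          (fun n => \sum_(a : A) k a * \sum_(0 <= t < n) q a t).
  by apply/funext => n; rewrite exchange_big; apply: eq_bigr => a _; rewrite mulr_sumr.
have -> : \sum_(a : A) k a = \sum_(a : A) k a * 1.
  by apply: eq_bigr => a _; rewrite mulr1.
apply: cvg_big => [|a _]; first exact: add_continuous.
exact: cvgMl_tmp (q_sums1 a).
Qed.

Lemma qbar_sums (p : A -> R) (B : {set A}) a0 : (forall a, 0 < p a) ->
  a0 \in B -> sums_to (qbar p q B) 1.
Proof.
move=> p_gt0 a0B; set D := \sum_(a in B) p a.
have D_gt0 : 0 < D.
  by apply/psumr_gt0P => [a _|]; [exact: ltW | exists a0].
have -> : qbar p q B = fun t => \sum_(a : A) (if a \in B then p a / D else 0) * q a t.
  apply/funext => t; rewrite /qbar mulr_suml big_mkcond; apply: eq_bigr => a _.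
  by case: ifP => _; rewrite ?mul0r // [q a t * _]mulrC mulrAC.
have <- : \sum_(a : A) (if a \in B then p a / D else 0) = 1.
  by rewrite -big_mkcond -mulr_suml divff // gt_eqF.
exact: sums_to_mix.
Qed.

End channel.

Section data_processing.
Variables (R : realType) (A : finType) (p pt : A -> R) (q : A -> nat -> R).
Hypotheses (p_gt0 : forall a, 0 < p a) (pt_gt0 : forall a, 0 < pt a).
Hypothesis q_ge0 : forall a t, 0 <= q a t.

Let ratio a := p a / pt a.
Let P := outdist p q.
Let Q := outdist pt q.
Let gap t := \sum_(a : A) p a * ln (ratio a) * q a t - P t * ln (P t / Q t).

Lemma ratio_gt0 a : 0 < ratio a.
Proof. exact: divr_gt0. Qed.

Lemma q_nonpos_eq0 a t : q a t <= 0 -> q a t = 0.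
Proof. by move=> qle; apply/le_anti; rewrite qle q_ge0. Qed.

Lemma P_gt0P t : 0 < P t <-> exists a, 0 < q a t.
Proof. exact: outdist_gt0P. Qed.

Lemma P_nonpos_eq0 t : P t <= 0 -> P t = 0.
Proof.
by move=> Ple; apply/le_anti; rewrite Ple outdist_ge0 // => a; exact: ltW.
Qed.

Lemma Q_gt0 t : 0 < P t -> 0 < Q t.
Proof. by move/P_gt0P/(outdist_gt0P q_ge0 _ pt_gt0). Qed.

Lemma gap_P0 t : P t = 0 -> gap t = 0.
Proof.
move=> P0; have q0 a : q a t = 0.
  apply: q_nonpos_eq0; rewrite leNgt; apply/negP => qa.
  have : 0 < P t by apply/P_gt0P; exists a.
  by rewrite P0 ltxx.
by rewrite /gap P0 mul0r subr0 big1 // => a _; rewrite q0 mulr0.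
Qed.

Lemma gapE t : 0 < P t ->
  gap t = \sum_(a : A) p a * q a t * ln_gap (P t / Q t / ratio a).
Proof.
move=> Pt; have Qt := Q_gt0 Pt; set r := P t / Q t.
have r_gt0 : 0 < r by rewrite divr_gt0.
rewrite (eq_bigr (fun a => r * (pt a * q a t) - p a * q a t
   - p a * q a t * ln r + p a * ln (ratio a) * q a t)); last first.
  move=> a _; rewrite /ln_gap ln_div ?posrE ?ratio_gt0 // /ratio.
  by field; rewrite !gt_eqF.
rewrite !big_split /= !sumrN -!mulr_sumr -!mulr_suml.
rewrite /gap -/(outdist pt q t) -/(outdist p q t) -/(P t) -/(Q t) /r.
by rewrite divfK ?gt_eqF //; ring.
Qed.

Lemma gap_term_ge0 t a : 0 < P t ->
  0 <= p a * q a t * ln_gap (P t / Q t / ratio a).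
Proof.
move=> Pt; rewrite !mulr_ge0 ?(ltW (p_gt0 a)) //.
by apply: ln_gap_ge0; rewrite !divr_gt0 ?ratio_gt0 ?Q_gt0.
Qed.

Lemma gap_ge0 t : 0 <= gap t.
Proof.
have [Pt|/P_nonpos_eq0/gap_P0 -> //] := ltP 0 (P t).
by rewrite gapE //; apply: sumr_ge0 => a _; exact: gap_term_ge0.
Qed.

Lemma gap_eq0_ratio t a : gap t = 0 -> 0 < q a t -> ratio a = P t / Q t.
Proof.
move=> gap0 qa; have Pt : 0 < P t by apply/P_gt0P; exists a.
move: gap0; rewrite gapE // => /psumr_eq0P-/(_ (fun b _ => gap_term_ge0 b Pt)).
move=> /(_ a isT) /eqP; rewrite !mulf_eq0 (gt_eqF (p_gt0 a)) (gt_eqF qa) /=.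
move=> /eqP /ln_gap_eq0; rewrite !divr_gt0 ?ratio_gt0 ?Q_gt0 // => /(_ isT) r_ratio.
by rewrite -[ratio a]mul1r -r_ratio divfK // gt_eqF ?ratio_gt0.
Qed.

Lemma ratio_const_gap_eq0 t a0 : 0 < q a0 t ->
  (forall a, 0 < q a t -> ratio a = ratio a0) -> gap t = 0.
Proof.
move=> qa0 ratio_const; have Pt : 0 < P t by apply/P_gt0P; exists a0.
have r_ratio : P t / Q t = ratio a0.
  suff -> : P t = ratio a0 * Q t by rewrite mulfK // gt_eqF ?Q_gt0.
  rewrite /P /Q /outdist mulr_sumr; apply: eq_bigr => a _.
  have [qa|/q_nonpos_eq0 ->] := ltP 0 (q a t); last by rewrite !mulr0.
  by rewrite -(ratio_const a qa) /ratio mulrA divfK // gt_eqF.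
rewrite gapE // big1 // => a _.
have [qa|/q_nonpos_eq0 ->] := ltP 0 (q a t); last by rewrite mulr0 mul0r.
rewrite r_ratio -(ratio_const a qa) divff ?gt_eqF ?ratio_gt0 //.
by rewrite /ln_gap ln1 !subrr mulr0.
Qed.

Lemma gap_eq0P t :
  gap t = 0 <-> forall a b, 0 < q a t -> 0 < q b t -> ratio a = ratio b.
Proof.
split=> [gap0 a b qa qb|ratio_const].
  by rewrite !(gap_eq0_ratio gap0).
have [Pt|/P_nonpos_eq0/gap_P0 //] := ltP 0 (P t).
have [a0 qa0] := (P_gt0P t).1 Pt.
by apply: (ratio_const_gap_eq0 qa0) => a qa; exact: ratio_const.
Qed.

Lemma gap_le t :
  gap t <= \sum_(a : A) (p a * ln (ratio a) - p a + pt a) * q a t.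
Proof.
have -> : \sum_(a : A) (p a * ln (ratio a) - p a + pt a) * q a t =
    \sum_(a : A) p a * ln (ratio a) * q a t - P t + Q t.
  by rewrite /P /Q /outdist -sumrB -big_split /=; apply: eq_bigr => a _; ring.
suff : P t - Q t <= P t * ln (P t / Q t) by rewrite /gap; lra.
have [Pt|/P_nonpos_eq0 ->] := ltP 0 (P t); first exact: subr_le_mul_ln_div (Q_gt0 Pt).
by rewrite mul0r sub0r oppr_le0 outdist_ge0 // => a; exact: ltW.
Qed.

Hypothesis q_sums1 : forall a, sums_to (q a) 1.

Let Lam := \sum_(a : A) p a * ln (ratio a).
Let gap_sum := limn (fun n => \sum_(0 <= t < n) gap t).

Lemma sums_to_gap : sums_to gap gap_sum.
Proof.
apply: (dominated_psum_cvg gap_ge0 gap_le).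
apply: (cvgP (\sum_(a : A) (p a * ln (ratio a) - p a + pt a))).
exact: sums_to_mix.
Qed.

Lemma klterm_outdist t : klterm (P t) (Q t) = (P t * ln (P t / Q t))%:E.
Proof.
have [Pt|/P_nonpos_eq0 ->] := ltP 0 (P t).
  by rewrite /klterm !gt_eqF ?Q_gt0.
by rewrite /klterm eqxx mul0r.
Qed.

Lemma KLnat_outdist : KLnat P Q = (Lam - gap_sum)%:E.
Proof.
have sums_klterm : sums_to (fun t => P t * ln (P t / Q t)) (Lam - gap_sum).
  have -> : (fun t => P t * ln (P t / Q t)) =
      fun t => \sum_(a : A) p a * ln (ratio a) * q a t - gap t.
    by apply/funext => t; rewrite /gap opprB addrC subrK.
  rewrite /sums_to; under eq_fun do rewrite sumrB.
  by apply: cvgB; [exact: sums_to_mix | exact: sums_to_gap].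
rewrite /KLnat -(cvg_lim _ sums_klterm) // -EFin_lim; last exact: cvgP sums_klterm.
congr (limn _); apply/funext => n /=; rewrite -sumEFin.
by apply: eq_bigr => t _; exact: klterm_outdist.
Qed.

Lemma KL_ratio : KL p pt = Lam%:E.
Proof.
by rewrite /KL /Lam -sumEFin; apply: eq_bigr => a _; rewrite /klterm !gt_eqF.
Qed.

Lemma KLnat_le_KL : (KLnat P Q <= KL p pt)%E.
Proof.
rewrite KLnat_outdist KL_ratio lee_fin gerDl oppr_le0.
exact: le_trans (gap_ge0 0) (sums_to_term_le gap_ge0 sums_to_gap 0).
Qed.

Lemma KLnat_eq_KLP : KLnat P Q = KL p pt <->
  forall t a b, 0 < q a t -> 0 < q b t -> ratio a = ratio b.
Proof.
rewrite KLnat_outdist KL_ratio; split=> [[]|ratio_const].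
  move=> /eqP; rewrite subr_eq addrC -subr_eq subrr eq_sym => /eqP.
  by move/(sums_to_eq0P gap_ge0 sums_to_gap) => gap0 t; apply/gap_eq0P/gap0.
suff -> : gap_sum = 0 by rewrite subr0.
by apply/(sums_to_eq0P gap_ge0 sums_to_gap) => t; apply/gap_eq0P/ratio_const.
Qed.

Lemma simr_ratio a b : simr p pt a b = (ratio a == ratio b).
Proof. by rewrite /simr /ratio eqr_div // gt_eqF. Qed.

Lemma block_in_blocks a : [set a' | simr p pt a a'] \in blocks p pt.
Proof. exact: imset_f. Qed.

Lemma mem_block a : a \in [set a' | simr p pt a a'].
Proof. by rewrite inE simr_ratio. Qed.

Lemma blocks_eq B1 B2 a : B1 \in blocks p pt -> B2 \in blocks p pt ->
  a \in B1 -> a \in B2 -> B1 = B2.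
Proof.
move=> /imsetP [a1 _ ->] /imsetP [a2 _ ->]; rewrite !inE !simr_ratio.
move=> /eqP r1 /eqP r2; apply/setP => x; rewrite !inE !simr_ratio.
by rewrite r1 r2.
Qed.

Lemma subset_blockP (S : {set A}) a0 : a0 \in S ->
  (exists2 B, B \in blocks p pt & S \subset B) <->
  {in S &, forall a b, ratio a = ratio b}.
Proof.
move=> a0S; split=> [[_ /imsetP [x _ ->] /fintype.subsetP SB] a b aS bS|r_const].
  by move: (SB a aS) (SB b bS); rewrite !inE !simr_ratio => /eqP <- /eqP <-.
exists [set a' | simr p pt a0 a']; first exact: block_in_blocks.
by apply/fintype.subsetP => a aS; rewrite inE simr_ratio (r_const a0 a).
Qed.

Definition supports_in_blocks := forall t, 0 < outdist p q t ->
  exists2 B, B \in blocks p pt & supp_at q t \subset B.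

Lemma supports_in_blocksP : supports_in_blocks <->
  forall t a b, 0 < q a t -> 0 < q b t -> ratio a = ratio b.
Proof.
split=> [sib t a b qa qb|r_const t /P_gt0P [a0 qa0]].
  have Pt : 0 < P t by apply/P_gt0P; exists a.
  have aS : a \in supp_at q t by rewrite inE.
  by apply: (subset_blockP aS).1 (sib t Pt) _ _ aS _; rewrite inE.
apply/(subset_blockP (_ : a0 \in supp_at q t)) => [|a b]; rewrite !inE //.
exact: r_const.
Qed.

Lemma KLnat_eq_KL_supportsP : KLnat P Q = KL p pt <-> supports_in_blocks.
Proof. exact: iff_trans KLnat_eq_KLP (iff_sym supports_in_blocksP). Qed.

Definition block_at (B0 : {set A}) t :=
  odflt B0 [pick B in blocks p pt | supp_at q t \subset B].

Lemma block_at_qbar B0 B t : supports_in_blocks -> B \in blocks p pt ->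
  0 < qbar p q B t -> block_at B0 t = B.
Proof.
move=> sib B_block /(qbar_gt0P q_ge0 B t p_gt0) [a aB qa].
have [Aj Aj_block sAj] : exists2 Aj, Aj \in blocks p pt & supp_at q t \subset Aj.
  by apply: sib; apply/P_gt0P; exists a.
rewrite /block_at; case: pickP => [B1 /andP [B1_block sB1]|none] /=.
  by apply: (blocks_eq B1_block B_block _ aB); apply: (fintype.subsetP sB1); rewrite inE.
by have := none Aj; rewrite Aj_block sAj.
Qed.

(* [a0] only supplies a default value for [f]: a congruence must map every
   output, even one with [P t = 0], to a block. *)
Lemma congruent_of_supports (a0 : A) :
  supports_in_blocks -> congruent_on (blocks p pt) (qbar p q).
Proof.
move=> sib; pose B0 := [set a' | simr p pt a0 a'].
exists (block_at B0); split=> [t|B B' B_block B'_block].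
  by rewrite /block_at; case: pickP => [B /andP []|_]; last exact: block_in_blocks.
have -> : (fun t => if block_at B0 t == B' then qbar p q B t else 0) =
    fun t => if B == B' then qbar p q B t else 0.
  apply/funext => t.
  have [/(block_at_qbar B0 sib B_block) -> //|qle] := ltP 0 (qbar p q B t).
  have -> : qbar p q B t = 0.
    by apply/le_anti; rewrite qle qbar_ge0 // => a; exact: ltW.
  by case: ifP; case: ifP.
case: eqP => _.
  by have [x _ ->] := imsetP B_block; exact: qbar_sums (mem_block x).
by rewrite /sums_to; under eq_fun do rewrite big1 //; exact: cvg_cst.
Qed.

Lemma supports_of_congruent :
  congruent_on (blocks p pt) (qbar p q) -> supports_in_blocks.
Proof.
move=> [f [f_block f_sums]] t _; exists (f t) => //.
apply/fintype.subsetP => a; rewrite inE => qa.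
set Ba := [set a' | simr p pt a a'].
have [<-|Ba_neq] := eqVneq Ba (f t); first exact: mem_block.
have := f_sums Ba (f t) (block_in_blocks a) (f_block t); rewrite (negbTE Ba_neq).
have u_ge0 s : 0 <= if f s == f t then qbar p q Ba s else 0.
  by case: ifP => // _; apply: (qbar_ge0 q_ge0) => b; exact: ltW.
move=> /(sums_to_eq0P u_ge0) [] /(_ erefl t); rewrite eqxx => qbar0 _.
suff : 0 < qbar p q Ba t by rewrite qbar0 ltxx.
by apply/(qbar_gt0P q_ge0 Ba t p_gt0); exists a => //; exact: mem_block.
Qed.

Lemma supports_congruentP (a0 : A) :
  supports_in_blocks <-> congruent_on (blocks p pt) (qbar p q).
Proof. by split; [exact: congruent_of_supports | exact: supports_of_congruent]. Qed.

End data_processing.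

Theorem lemma7 (R : realType) (A : finType) (d : nat) (nu : A -> R)
    (phi : 'I_d -> A -> R) (p pt : A -> R) (q : A -> nat -> R) :
  (forall a, 0 < nu a) ->
  is_dist p -> (forall a, 0 < p a) ->
  in_closure (in_expfam nu phi) pt ->
  (forall r, in_closure (in_expfam nu phi) r -> (KL p pt <= KL p r)%E) ->
  (forall a, 0 < pt a) ->
  is_channel q ->
  (KLnat (outdist p q) (outdist pt q) <= KL p pt)%E /\
  (KLnat (outdist p q) (outdist pt q) = KL p pt <->
   (forall t, 0 < outdist p q t ->
      exists2 Aj, Aj \in blocks p pt & supp_at q t \subset Aj)) /\
  ((forall t, 0 < outdist p q t ->
      exists2 Aj, Aj \in blocks p pt & supp_at q t \subset Aj) <->
   congruent_on (blocks p pt) (qbar p q)).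
Proof.
move=> _ [_ p_sum1] p_gt0 _ _ pt_gt0 q_channel.
have q_ge0 a t : 0 <= q a t by have [] := q_channel a.
have q_sums1 a : sums_to (q a) 1 by have [] := q_channel a.
have [a0 _|A_empty] := pickP (@predT A); last first.
  by move: p_sum1; rewrite big_pred0 // => /esym/eqP; rewrite oner_eq0.
split; first exact: KLnat_le_KL.
split; first exact: KLnat_eq_KL_supportsP.
exact: supports_congruentP a0.
Qed.
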